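(* Fix $0<\alpha<1$ and $f\in C^\alpha(\Omega)$. Then for every $\varphi\in C(\Omega)$, $$\lim_{n\to\infty}\left\|\frac1n\,\frac{\mathscr{L}_f^n(S_n\varphi)}{\mathscr{L}_f^n\mathbf{1}}-\int_\Omega\varphi\,h_f\,d\nu_f\right\|_0=0.$$
   Context: Let $(M,d)$ be a compact metric space and $\mu$ a Borel probability measure on $M$ with full support. $\Omega=M^{\mathbb{N}}$ with metric $d_\Omega(x,y)=\sum_{n\ge1}2^{-n}d(x_n,y_n)$, $\sigma$ the left shift, $C(\Omega)$ the continuous functions with sup norm $\|\cdot\|_0$, $C^\alpha(\Omega)$ the $\alpha$-Hölder functions. The Ruelle operator is $\mathscr{L}_f\varphi(x)=\int_M e^{f(ax)}\varphi(ax)\,d\mu(a)$ with $ax=(a,x_1,x_2,\dots)$; $\mathbf 1$ is the constant function $1$; $S_n\varphi=\sum_{j=0}^{n-1}\varphi\circ\sigma^j$. For $f\in C^\alpha(\Omega)$, $\lambda_f>0$, $h_f>0$ and $\nu_f$ are the maximal eigenvalue, eigenfunction and eigenmeasure from the Ruelle–Perron–Frobenius theorem: $\mathscr{L}_fh_f=\lambda_fh_f$, $\mathscr{L}_f^*\nu_f=\lambda_f\nu_f$, $\nu_f$ a probability measure, $\int h_f d\nu_f=1$, and $\|\lambda_f^{-n}\mathscr{L}_f^n\varphi-h_f\int\varphi\,d\nu_f\|_0\to0$ for all $\varphi\in C(\Omega)$. *)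

From HB Require Import structures.
From mathcomp Require Import all_boot all_order all_algebra.
From mathcomp Require Import all_classical all_reals all_analysis.
Set Implicit Arguments. Unset Strict Implicit. Unset Printing Implicit Defensive.
Import Order.TTheory GRing.Theory Num.Theory.
Import numFieldNormedType.Exports.
Local Open Scope classical_set_scope.
Local Open Scope ring_scope.

Section Defs.
Variable R : realType.

Definition is_metric {M : Type} (d : M -> M -> R) : Prop :=
  [/\ forall x y, 0 <= d x y,
      forall x y, d x y = 0 <-> x = y,
      forall x y, d x y = d y x &
      forall x y z, d x z <= d x y + d y z].

Definition d_open {T : Type} (d : T -> T -> R) : set (set T) :=
  [set U | forall x, U x -> exists2 e : R, 0 < e & forall y, d x y < e -> U y].

Definition d_compact {M : Type} (d : M -> M -> R) : Prop :=
  forall u : nat -> M, exists (phi : nat -> nat) (l : M),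
    (forall n, (phi n < phi n.+1)%N) /\
    (fun n => d (u (phi n)) l) @ \oo --> (0 : R).

(* Omega = M^N, with x_1 stored at index 0 *)
Definition dOmega {M : Type} (d : M -> M -> R) (x y : nat -> M) : R :=
  limn (fun n => \sum_(k < n) (2^-1) ^+ k.+1 * d (x k) (y k)).

Definition shift {M : Type} (x : nat -> M) : nat -> M := fun n => x n.+1.

Definition scons {M : Type} (a : M) (x : nat -> M) : nat -> M :=
  fun n => if n is k.+1 then x k else a.

Definition d_continuous {T : Type} (dT : T -> T -> R) (g : T -> R) : Prop :=
  forall x (e : R), 0 < e -> exists2 delta : R, 0 < delta &
    forall y, dT x y < delta -> `|g x - g y| < e.

Definition d_holder {T : Type} (dT : T -> T -> R) (alpha : R) (g : T -> R) : Prop :=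
  exists C : R, forall x y, `|g x - g y| <= C * (dT x y) `^ alpha.

Definition supnorm {T : Type} (g : T -> R) : R := sup [set `|g x| | x in [set: T]].

Definition Birkhoff {M : Type} (n : nat) (phi : (nat -> M) -> R) (x : nat -> M) : R :=
  \sum_(j < n) phi (iter j shift x).

End Defs.

Definition BorelM {R : realType} {M : pointedType} (d : M -> M -> R) :=
  g_sigma_algebraType (d_open d).
Definition BorelOmega {R : realType} {M : pointedType} (d : M -> M -> R) :=
  g_sigma_algebraType (d_open (dOmega d)).

Definition Ruelle {R : realType} {M : pointedType} (d : M -> M -> R)
  (mu : probability (BorelM d) R) (f phi : (nat -> M) -> R) (x : nat -> M) : R :=
  fine (\int[mu]_(a in [set: BorelM d]) (expR (f (scons a x)) * phi (scons a x))%:E)%E.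

(* Writing u_j := lam^-j L^j 1, the identity L^k ((psi o sigma^k) g) = psi L^k g
   turns the normalised Birkhoff sum into
     lam^-n L^n (S_n phi) = sum_(j < n) lam^-(n-j) L^(n-j) (phi u_j).
   The uniform Ruelle-Perron-Frobenius convergence gives u_j -> h and
   lam^-k L^k (phi h) -> c h with c = int phi h dnu, so the j-th term is c h up
   to an error b_(n-j) + K a_j with a, b -> 0; the Cesaro mean of these errors
   vanishes, and dividing by u_n -> h >= min h > 0 yields the claim.  Every
   function met along the way is continuous on Omega = M^N, which is compact
   by a diagonal argument; this is what makes the integrals defining L finite
   and L linear, monotone and continuity-preserving. *)

From Pilot Require Import Defs.
From HB Require Import structures.
From mathcomp Require Import all_boot all_order all_algebra.
From mathcomp Require Import all_classical all_reals all_analysis.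
From mathcomp Require Import ring lra.
Import Order.TTheory GRing.Theory Num.Theory.
Import numFieldNormedType.Exports.

Set Implicit Arguments.
Unset Strict Implicit.
Unset Printing Implicit Defensive.
Local Open Scope classical_set_scope.
Local Open Scope ring_scope.

Section real_sequences.
Variable R : realType.

Lemma halfpow_ge0 n : 0 <= (2^-1 : R) ^+ n.
Proof. by rewrite exprn_ge0 // invr_ge0. Qed.

Lemma halfpow_lt (c e : R) : 0 < e -> exists N, c * 2^-1 ^+ N < e.
Proof.
move=> e0; have c1 : 0 < `|c| + 1 by rewrite ltr_pwDr.
have /cvgrPdist_lt/(_ _ (divr_gt0 e0 c1))[N _ /(_ N (leqnn N))] :
    (fun n => (2^-1 : R) ^+ n) @ \oo --> 0.
  by apply: cvg_expr; rewrite gtr0_norm ?invf_lt1 ?ltr1n.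
rewrite /= sub0r normrN (ger0_norm (halfpow_ge0 N)) => HqN; exists N.
apply: le_lt_trans (ler_norm _) _; rewrite normrM (ger0_norm (halfpow_ge0 N)).
apply: (le_lt_trans (y := (`|c| + 1) * 2^-1 ^+ N)).
  by rewrite ler_wpM2r ?halfpow_ge0 // lerDl.
by rewrite mulrC -ltr_pdivlMr.
Qed.

Lemma ler_halfpow_slack (x y c : R) :
  (forall N, x <= y + c * 2^-1 ^+ N) -> x <= y.
Proof.
move=> H; apply/ler_addgt0Pr => e e0; have [N HN] := @halfpow_lt c e e0.
by apply: le_trans (H N) _; rewrite lerD2l ltW.
Qed.

Lemma eq_halfpow_slack (x y c : R) :
  (forall N, `|x - y| <= c * 2^-1 ^+ N) -> x = y.
Proof.
move=> H; apply/eqP; rewrite eq_le; apply/andP; split;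
  apply: (@ler_halfpow_slack _ _ c) => N; rewrite -lerBlDl.
  exact: le_trans (ler_norm _) (H N).
by rewrite -normrN opprB in H; exact: le_trans (ler_norm _) (H N).
Qed.

Lemma cvg0_harmonic_bound (v : nat -> R) :
  (forall n, 0 <= v n <= n.+1%:R^-1) -> v @ \oo --> 0.
Proof.
move=> hv; apply: (@squeeze_cvgr _ _ _ _ (fun=> 0) harmonic); last exact: cvg_harmonic.
- by apply: nearW => n; exact: hv.
- exact: cvg_cst.
Qed.

Lemma cvg_mean_reversed (a b : nat -> R) (K : R) : a @ \oo --> 0 -> b @ \oo --> 0 ->
  (fun n => n%:R^-1 * \sum_(j < n) (b (n - j)%N + K * a j)) @ \oo --> 0.
Proof.
move=> a0 b0; rewrite -cvg_shiftS.
have v0 : (fun k => b k.+1 + K * a k) @ \oo --> 0.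
  rewrite -(addr0 0); apply: cvgD; first by move: b0; rewrite -cvg_shiftS.
  by rewrite -(mulr0 K); apply: cvgM => //; exact: cvg_cst.
suff -> : [sequence n.+1%:R^-1 * \sum_(j < n.+1) (b (n.+1 - j)%N + K * a j)]_n =
    arithmetic_mean (fun k => b k.+1 + K * a k) by exact: cesaro.
apply/funext => n; rewrite /arithmetic_mean /series /= big_mkord !big_split /=.
congr (_ * (_ + _)); rewrite (reindex_inj rev_ord_inj) /=; apply: eq_bigr => j _.
by rewrite subKn.
Qed.

End real_sequences.

Lemma increasing_geq (phi : nat -> nat) :
  (forall n, (phi n < phi n.+1)%N) -> forall n, (n <= phi n)%N.
Proof. by move=> H; elim=> [|n IH] //; exact: leq_ltn_trans IH (H n). Qed.

Section weighted_sums.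
Variable R : realType.
Local Notation q := (2^-1 : R).

Definition wsum N (t : nat -> R) := \sum_(k < N) q ^+ k.+1 * t k.

Lemma wsum_bound t c : (forall k, 0 <= t k <= c) ->
  forall N, 0 <= wsum N t <= c - c * q ^+ N.
Proof.
move=> ht; elim=> [|N IH]; first by rewrite /wsum big_ord0 expr0 mulr1 subrr lexx.
rewrite /wsum big_ord_recr /= -/(wsum N t) exprS [q * _]mulrC.
have [t0 tc] := andP (ht N); move: IH (halfpow_ge0 R N); set Q := q ^+ N.
move=> /andP[s0 sc] Q0.
have h0 : 0 <= Q * t N by rewrite mulr_ge0.
have h1 : Q * t N <= Q * c by rewrite ler_wpM2l.
apply/andP; split; nra.
Qed.

Lemma wsum_split N m t :
  wsum (N + m) t = wsum N t + q ^+ N * wsum m (fun k => t (N + k)%N).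
Proof.
rewrite /wsum big_split_ord /=; congr (_ + _); rewrite big_distrr /=.
by apply: eq_bigr => i _; rewrite -addnS exprD mulrA.
Qed.

Lemma wsum_cons N t : wsum N.+1 t = q * t 0%N + q * wsum N (fun k => t k.+1).
Proof.
rewrite /wsum big_ord_recl /= expr1; congr (_ + _); rewrite big_distrr /=.
by apply: eq_bigr => i _; rewrite exprS mulrA.
Qed.

End weighted_sums.

Section bounded_metric.
Variables (R : realType) (M : pointedType) (d : M -> M -> R).
Hypothesis dm : is_metric d.
Variable B : R.
Hypothesis dB : forall a b, d a b <= B.
Local Notation q := (2^-1 : R).
Local Notation D := (dOmega d).

Lemma d_ge0 x y : 0 <= d x y. Proof. by case: dm. Qed.
Lemma d_sym x y : d x y = d y x. Proof. by case: dm. Qed.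
Lemma d_triangle x y z : d x z <= d x y + d y z. Proof. by case: dm. Qed.
Lemma d_refl x : d x x = 0. Proof. by case: dm => _ H _ _; apply/H. Qed.

Lemma bound_ge0 : 0 <= B.
Proof. exact: le_trans (d_ge0 point point) (dB _ _). Qed.

Let dsum N (x y : nat -> M) := wsum N (fun k => d (x k) (y k)).

Let dsum_bound N x y : 0 <= dsum N x y <= B - B * q ^+ N.
Proof. by apply: wsum_bound => k; rewrite dB d_ge0. Qed.

Lemma dOmega_approx x y N : dsum N x y <= D x y <= dsum N x y + B * q ^+ N.
Proof.
have tail n m : 0 <= q ^+ n * dsum m (fun k => x (n + k)%N) (fun k => y (n + k)%N)
                   <= B * q ^+ n.
  have /andP[s0 sB] := dsum_bound m (fun k => x (n + k)%N) (fun k => y (n + k)%N).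
  have Qn := halfpow_ge0 R n; rewrite mulr_ge0 //= mulrC ler_wpM2r //.
  by apply: le_trans sB _; rewrite lerBlDr lerDl mulr_ge0 ?bound_ge0 ?halfpow_ge0.
have hmono : {homo (fun n => dsum n x y) : n m / (n <= m)%N >-> n <= m}.
  move=> n m /subnK <-; rewrite addnC /dsum wsum_split lerDl.
  by case/andP: (tail n (m - n)%N).
have hub : has_ubound (range (fun n => dsum n x y)).
  exists B => _ [n _ <-]; have /andP[_ h] := dsum_bound n x y.
  by apply: le_trans h _; rewrite lerBlDr lerDl mulr_ge0 ?bound_ge0 ?halfpow_ge0.
have -> : D x y = sup (range (fun n => dsum n x y)).
  exact: cvg_lim (nondecreasing_cvgn hmono hub).
apply/andP; split; first by apply: ub_le_sup => //; exists N.
apply: ge_sup; first by exists (dsum 0 x y), 0%N.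
move=> _ [n _ <-]; have [nN|Nn] := leqP n N.
  by apply: le_trans (hmono _ _ nN) _; rewrite lerDl mulr_ge0 ?bound_ge0 ?halfpow_ge0.
rewrite -(subnKC (ltnW Nn)) /dsum wsum_split lerD2l.
by case/andP: (tail N (n - N)%N).
Qed.

Lemma dOmega_ge0 x y : 0 <= D x y.
Proof.
by have /andP[+ _] := dOmega_approx x y 0; apply: le_trans; rewrite /dsum /wsum big_ord0.
Qed.

Lemma dOmega_sym x y : D x y = D y x.
Proof.
apply: (@eq_halfpow_slack _ _ _ B) => N.
have /andP[a b] := dOmega_approx x y N; have /andP[c e] := dOmega_approx y x N.
have E : dsum N y x = dsum N x y.
  by rewrite /dsum /wsum; apply: eq_bigr => i _; rewrite d_sym.
rewrite E in c e; rewrite ler_norml; apply/andP; split; lra.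
Qed.

Lemma dOmega_triangle x y z : D x z <= D x y + D y z.
Proof.
apply: (@ler_halfpow_slack _ _ _ B) => N.
have /andP[a b] := dOmega_approx x z N.
have /andP[c _] := dOmega_approx x y N; have /andP[e _] := dOmega_approx y z N.
have : dsum N x z <= dsum N x y + dsum N y z.
  rewrite /dsum /wsum -big_split /=; apply: ler_sum => i _.
  by rewrite -mulrDr ler_wpM2l ?halfpow_ge0 ?d_triangle.
lra.
Qed.

Lemma dOmega_refl x : D x x = 0.
Proof.
apply: (@eq_halfpow_slack _ _ _ B) => N.
have /andP[a b] := dOmega_approx x x N.
have E : dsum N x x = 0 by rewrite /dsum /wsum big1 // => i _; rewrite d_refl mulr0.
rewrite E in a b; rewrite subr0 ger0_norm ?dOmega_ge0 //; lra.
Qed.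

Lemma dOmega_scons a b x y : D (scons a x) (scons b y) = d a b / 2 + D x y / 2.
Proof.
apply: (@eq_halfpow_slack _ _ _ (2 * B)) => N.
have /andP[u v] := dOmega_approx (scons a x) (scons b y) N.+1.
have /andP[w z] := dOmega_approx x y N.
have E : dsum N.+1 (scons a x) (scons b y) = d a b / 2 + dsum N x y / 2.
  by rewrite /dsum wsum_cons /= !(mulrC q).
rewrite E exprS in u v; move: v z (halfpow_ge0 R N) bound_ge0; set Q := q ^+ N.
by move=> v z Q0 B0; rewrite ler_norml; apply/andP; split; nra.
Qed.

Lemma dOmega_shift x y : D (Defs.shift x) (Defs.shift y) <= 2 * D x y.
Proof.
have -> : D x y = D (scons (x 0%N) (Defs.shift x)) (scons (y 0%N) (Defs.shift y)).
  by congr D; apply/funext => -[].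
by rewrite dOmega_scons; have := d_ge0 (x 0%N) (y 0%N); lra.
Qed.

End bounded_metric.

Section unbounded.
Variable R : realType.

Lemma unbounded_seq T (g : T -> R) : ~ (exists K, forall x, g x <= K) ->
  exists u : nat -> T, forall n, n%:R < g (u n).
Proof.
move=> nb; suff /choice[u Hu] : forall n : nat, exists x, n%:R < g x by exists u.
move=> n; apply: contra_notP nb => /forallNP gn; exists n%:R => x.
by rewrite leNgt; apply/negP => /gn.
Qed.

Lemma unbounded_subseq_not_cvg (v : nat -> R) (phi : nat -> nat) (l : R) :
  (forall n, (phi n < phi n.+1)%N) -> (forall n, n%:R < v n) ->
  ~ (fun n => v (phi n)) @ \oo --> l.
Proof.
move=> phiI vn cv; have [K [Kreal HK]] := cvg_seq_bounded (cvgP _ cv).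
have K0 : 0 <= `|K| + 1 by rewrite addr_ge0.
pose n := Num.Def.archi_bound (`|K| + 1).
have vK : v (phi n) <= `|K| + 1.
  apply: le_trans (ler_norm _) _; apply: HK => //.
  by apply: le_lt_trans (ler_norm K) _; rewrite ltrDl.
have : n%:R <= (phi n)%:R :> R by rewrite ler_nat increasing_geq.
have := archi_boundP K0; have := vn (phi n); lra.
Qed.

End unbounded.

Section compact_metric.
Variables (R : realType) (M : pointedType) (d : M -> M -> R).
Hypothesis dm : is_metric d.
Hypothesis dc : d_compact d.

Lemma compact_metric_bounded : exists B, forall a b, d a b <= B.
Proof.
pose p := (point : M).
suff [B HB] : exists B, forall a, d p a <= B.
  exists (B + B) => a b; have := d_triangle dm a p b; have := HB a; have := HB b.
  by rewrite (d_sym dm a p); lra.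
apply: contrapT => /unbounded_seq[u Hu].
have [phi [l [phiI cv]]] := dc u.
suff : (fun n => d p (u (phi n))) @ \oo --> d p l.
  exact: (@unbounded_subseq_not_cvg _ (fun n => d p (u n))).
move/cvgrPdist_le : cv => cv; apply/cvgrPdist_le => e e0; apply: filterS (cv e e0) => n.
rewrite sub0r normrN ger0_norm ?(d_ge0 dm) // => hn; rewrite ler_norml.
have := d_triangle dm p l (u (phi n)); have := d_triangle dm p (u (phi n)) l.
by rewrite (d_sym dm l); lra.
Qed.

End compact_metric.

Section Omega_compact.
Variables (R : realType) (M : pointedType) (d : M -> M -> R).
Hypothesis dm : is_metric d.
Variable B : R.
Hypothesis dB : forall a b, d a b <= B.
Hypothesis dc : d_compact d.
Local Notation D := (dOmega d).

Lemma dOmega_cvg_coord (u : nat -> nat -> M) (l : nat -> M) :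
  (forall k, (fun n => d (u n k) (l k)) @ \oo --> 0) ->
  (fun n => D (u n) l) @ \oo --> 0.
Proof.
move=> ul; apply/cvgrPdist_lt => e e0; have e2 : 0 < e / 2 by rewrite divr_gt0.
have [N BN] := halfpow_lt B e2.
have : \forall n \near \oo, forall k : 'I_N, d (u n k) (l k) < e / 2.
  apply: filter_forall => k; move/cvgrPdist_lt: (ul k) => /(_ _ e2).
  by apply: filterS => n; rewrite sub0r normrN ger0_norm ?(d_ge0 dm).
apply: filterS => n un; rewrite sub0r normrN ger0_norm ?(dOmega_ge0 dm dB) //.
have /andP[_ Dn] := dOmega_approx dm dB (u n) l N.
have : wsum N (fun k => d (u n k) (l k)) <= wsum N (fun=> e / 2).
  by apply: ler_sum => k _; rewrite ler_wpM2l ?halfpow_ge0 // ltW // un.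
have /andP[_ ] := @wsum_bound _ (fun=> e / 2) (e / 2) (fun=> ltac:(by rewrite lexx ltW)) N.
have := halfpow_ge0 R N; have := e0; nra.
Qed.

Lemma Omega_compact : d_compact D.
Proof.
(* Diagonal argument: [ext k] composes the first [k] successive extractions,
   along which the coordinates [0, .., k-1] converge. *)
move=> u.
have /choice[C HC] : forall v : nat -> M, exists pl : (nat -> nat) * M,
    (forall n, (pl.1 n < pl.1 n.+1)%N) /\ (fun n => d (v (pl.1 n)) pl.2) @ \oo --> 0.
  by move=> v; have [phi [l [h1 h2]]] := dc v; exists (phi, l).
pose ext := fix ext (k : nat) : nat -> nat :=
  if k is k'.+1 then (fun n => ext k' ((C (fun m => u (ext k' m) k')).1 n)) else id.
pose psi k := (C (fun m => u (ext k m) k)).1.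
pose l k := (C (fun m => u (ext k m) k)).2.
have extS k n : ext k.+1 n = ext k (psi k n) by [].
have psiI k : forall n, (psi k n < psi k n.+1)%N by case: (HC (fun m => u (ext k m) k)).
have ext_cvg k : (fun n => d (u (ext k.+1 n) k) (l k)) @ \oo --> 0.
  by case: (HC (fun m => u (ext k m) k)).
have extI k : forall n, (ext k n < ext k n.+1)%N.
  by elim: k => [//|k IH] n; rewrite !extS; exact: (homo_ltn ltn_trans IH (psiI k n)).
have ext_sub k j : exists rho : nat -> nat, (forall m, (m <= rho m)%N) /\
    forall m, ext (k + j)%N m = ext k (rho m).
  elim: j => [|j [rho [r1 r2]]]; first by exists id; rewrite addn0.
  exists (fun m => rho (psi (k + j)%N m)); split.
    by move=> m; exact: leq_trans (increasing_geq (psiI (k + j)%N) m) (r1 _).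
  by move=> m; rewrite addnS extS r2.
exists (fun n => ext n n), l; split.
  move=> n; rewrite extS; apply: (homo_ltn ltn_trans (extI n)).
  exact: leq_ltn_trans (increasing_geq (psiI n) n) (psiI n n).
apply: dOmega_cvg_coord => k; apply/cvgrPdist_lt => e e0.
have [N _ HN] := (cvgrPdist_lt _ _).1 (ext_cvg k) e e0.
exists (maxn N k.+1) => // n /= hn.
have [rho [r1 r2]] := ext_sub k.+1 (n - k.+1)%N.
move: (r2 n); rewrite subnKC; last exact: leq_trans (leq_maxr _ _) hn.
move=> ->; apply: HN; apply: leq_trans (r1 n).
exact: leq_trans (leq_maxl _ _) hn.
Qed.

End Omega_compact.

Section Omega_continuity.
Variables (R : realType) (M : pointedType) (d : M -> M -> R).
Hypothesis dm : is_metric d.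
Variable B : R.
Hypothesis dB : forall a b, d a b <= B.
Local Notation D := (dOmega d).
Local Notation C := (d_continuous D).

Lemma dcont_cvg (g : (nat -> M) -> R) (u : nat -> nat -> M) x : C g ->
  (fun n => D (u n) x) @ \oo --> 0 -> (fun n => g (u n)) @ \oo --> g x.
Proof.
move=> cg /cvgrPdist_lt ux; apply/cvgrPdist_lt => e e0.
have [de de0 Hd] := cg x e e0; apply: filterS (ux de de0) => n.
by rewrite sub0r normrN ger0_norm ?(dOmega_ge0 dm dB) // (dOmega_sym dm dB); exact: Hd.
Qed.

Lemma cvg_dcont (g : (nat -> M) -> R) :
  (forall x (u : nat -> nat -> M), (fun n => D (u n) x) @ \oo --> 0 ->
     (fun n => g (u n)) @ \oo --> g x) -> C g.
Proof.
move=> H x e e0; apply: contrapT => nd.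
have /choice[u Hu] : forall n : nat, exists y, D x y < n.+1%:R^-1 /\ e <= `|g x - g y|.
  move=> n; apply: contrapT => ny; apply: nd; exists n.+1%:R^-1 => // y Dy.
  by rewrite ltNge; apply/negP => ey; apply: ny; exists y.
have /H/cvgrPdist_lt/(_ e e0) : (fun n => D (u n) x) @ \oo --> 0.
  apply: cvg0_harmonic_bound => n; rewrite (dOmega_sym dm dB) (dOmega_ge0 dm dB).
  by rewrite ltW //; case: (Hu n).
by case=> N _ /(_ N (leqnn N)); case: (Hu N) => _; rewrite leNgt => /negP.
Qed.

Lemma dcont_cst c : C (fun=> c).
Proof. by move=> x e e0; exists 1 => // y _; rewrite subrr normr0. Qed.

Lemma dcontD g1 g2 : C g1 -> C g2 -> C (fun z => g1 z + g2 z).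
Proof. by move=> c1 c2; apply: cvg_dcont => x u ux; apply: cvgD; apply: dcont_cvg. Qed.

Lemma dcontB g1 g2 : C g1 -> C g2 -> C (fun z => g1 z - g2 z).
Proof. by move=> c1 c2; apply: cvg_dcont => x u ux; apply: cvgB; apply: dcont_cvg. Qed.

Lemma dcontM g1 g2 : C g1 -> C g2 -> C (fun z => g1 z * g2 z).
Proof. by move=> c1 c2; apply: cvg_dcont => x u ux; apply: cvgM; apply: dcont_cvg. Qed.

Lemma dcontV g : C g -> (forall x, g x != 0) -> C (fun z => (g z)^-1).
Proof. by move=> cg g0; apply: cvg_dcont => x u ux; apply: cvgV; last exact: dcont_cvg. Qed.

Lemma dcont_expR g : C g -> C (fun z => expR (g z)).
Proof.
move=> cg; apply: cvg_dcont => x u ux.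
by apply: continuous_cvg; [exact: continuous_expR | exact: dcont_cvg].
Qed.

Lemma dcont_sum (G : nat -> (nat -> M) -> R) n : (forall j, C (G j)) ->
  C (fun z => \sum_(j < n) G j z).
Proof.
move=> cG; elim: n => [|n IH].
  by under eq_fun do rewrite big_ord0; exact: dcont_cst.
by under eq_fun do rewrite big_ord_recr /=; exact: dcontD.
Qed.

Lemma dcont_shift g : C g -> C (fun z => g (Defs.shift z)).
Proof.
move=> cg x e e0; have [de de0 Hd] := cg (Defs.shift x) e e0.
exists (de / 2); first by rewrite divr_gt0.
by move=> y Dy; apply: Hd; have := dOmega_shift dm dB x y; lra.
Qed.

Lemma dcont_iter_shift g j : C g -> C (fun z => g (iter j Defs.shift z)).
Proof.
move=> cg; elim: j => [//|j IH].
under eq_fun do rewrite iterSr; exact: (dcont_shift IH).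
Qed.

Lemma dcont_scons g x : C g -> d_continuous d (fun a => g (scons a x)).
Proof.
move=> cg a e e0; have [de de0 Hd] := cg (scons a x) e e0.
exists (2 * de); first by rewrite mulr_gt0.
by move=> b dab; apply: Hd; rewrite (dOmega_scons dm dB) (dOmega_refl dm dB); lra.
Qed.

Lemma dcont_holder alpha g : 0 < alpha -> d_holder D alpha g -> C g.
Proof.
move=> a0 [K HK] x e e0.
have K1 : 0 < `|K| + 1 by rewrite ltr_pwDr.
pose a := e / (`|K| + 1); have a0' : 0 < a by rewrite divr_gt0.
exists (a `^ alpha^-1); first exact: powR_gt0.
move=> y Dy; have Dxy0 := dOmega_ge0 dm dB x y.
have Da : D x y `^ alpha < a.
  have := @gt0_ltr_powR R alpha a0 (D x y) (a `^ alpha^-1).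
  rewrite -powRrM mulVf ?gt_eqF // powRr1 ?(ltW a0') //; apply => //.
  by rewrite nnegrE powR_ge0.
apply: le_lt_trans (HK x y) _.
have h1 : K * D x y `^ alpha <= `|K| * D x y `^ alpha.
  by rewrite ler_wpM2r ?powR_ge0 ?ler_norm.
have h2 : `|K| * D x y `^ alpha <= `|K| * a by rewrite ler_wpM2l // ltW.
have ha : a * (`|K| + 1) = e by rewrite /a divfK ?gt_eqF.
lra.
Qed.

Hypothesis dc : d_compact d.

Lemma dcont_bounded g : C g -> exists K, forall x, `|g x| <= K.
Proof.
move=> cg; apply: contrapT => /(@unbounded_seq _ _ (fun x => `|g x|))[u Hu].
have [phi [l [phiI ul]]] := Omega_compact dm dB dc u.
suff : (fun n => `|g (u (phi n))|) @ \oo --> `|g l|.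
  exact: (@unbounded_subseq_not_cvg _ (fun n => `|g (u n)|)).
by apply: cvg_norm; exact: (dcont_cvg (u := fun n => u (phi n))).
Qed.

Lemma dcont_inf_gt0 g : C g -> (forall x, 0 < g x) ->
  exists2 m, 0 < m & forall x, m <= g x.
Proof.
move=> cg gpos; have [K HK] := dcont_bounded (dcontV cg (fun x => lt0r_neq0 (gpos x))).
have K0 : 0 < K.
  by apply: lt_le_trans (HK point); rewrite normr_gt0 invr_neq0 ?lt0r_neq0.
exists K^-1 => [|x]; first by rewrite invr_gt0.
rewrite -[g x]invrK lef_pV2 ?posrE ?invr_gt0 //; exact: le_trans (ler_norm _) (HK x).
Qed.

Lemma dcont_uniform g : C g -> forall e, 0 < e ->
  exists2 de, 0 < de & forall x y, D x y < de -> `|g x - g y| < e.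
Proof.
move=> cg e e0; apply: contrapT => nu.
have /choice[w Hw] : forall n : nat, exists w : (nat -> M) * (nat -> M),
    D w.1 w.2 < n.+1%:R^-1 /\ e <= `|g w.1 - g w.2|.
  move=> n; apply: contrapT => nw; apply: nu; exists n.+1%:R^-1 => // x y Dxy.
  by rewrite ltNge; apply/negP => exy; apply: nw; exists (x, y).
have [phi [l [phiI xl]]] := Omega_compact dm dB dc (fun n => (w n).1).
have yl : (fun n => D (w (phi n)).2 l) @ \oo --> 0.
  apply: (@squeeze_cvgr _ _ _ _ (fun=> 0) (fun n => n.+1%:R^-1 + D (w (phi n)).1 l)).
  - apply: nearW => n; rewrite (dOmega_ge0 dm dB) /=.
    apply: le_trans (dOmega_triangle dm dB _ (w (phi n)).1 l) _.
    rewrite lerD2r (dOmega_sym dm dB); apply: ltW; apply: lt_le_trans (Hw (phi n)).1 _.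
    by rewrite lef_pV2 ?posrE ?ltr0n // ler_nat ltnS increasing_geq.
  - exact: cvg_cst.
  - by rewrite -[0]addr0; apply: cvgD => //; exact: cvg_harmonic.
have /cvgrPdist_lt/(_ e e0)[N _ /(_ N (leqnn N))] :
    (fun n => g (w (phi n)).1 - g (w (phi n)).2) @ \oo --> 0.
  by rewrite -(subrr (g l)); apply: cvgB; exact: dcont_cvg.
by rewrite /= sub0r normrN ltNge; case: (Hw (phi N)) => _ ->.
Qed.

End Omega_continuity.

Lemma Rintegral_dist_le {R : realType} d (T : measurableType d)
    (P : probability T R) (F1 F2 : T -> R) (e : R) :
  P.-integrable setT (EFin \o F1) -> P.-integrable setT (EFin \o F2) ->
  (forall a, `|F1 a - F2 a| <= e) ->
  `|Rintegral P setT F1 - Rintegral P setT F2| <= e.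
Proof.
move=> i1 i2 Fe; rewrite -RintegralB //.
have i12 : P.-integrable setT (EFin \o (fun a => F1 a - F2 a)) by exact: integrableB i1 i2.
apply: le_trans (le_normr_Rintegral _ i12) _ => //.
apply: le_trans (@le_Rintegral _ _ _ _ _ _ (fun=> e) _ (integrable_norm i12) _ _) _ => //.
- exact: finite_measure_integrable_cst.
- by move=> a _; exact: Fe.
- by rewrite Rintegral_cst // (_ : fine (P [set: T]) = 1) ?mulr1 // probability_setT.
Qed.

Section Ruelle_operator.
Variables (R : realType) (M : pointedType) (d : M -> M -> R).
Hypothesis dm : is_metric d.
Variable B : R.
Hypothesis dB : forall a b, d a b <= B.
Hypothesis dc : d_compact d.
Variables (mu : probability (BorelM d) R) (f : (nat -> M) -> R).
Hypothesis cf : d_continuous (dOmega d) f.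
Local Notation D := (dOmega d).
Local Notation C := (d_continuous D).
Local Notation L := (Ruelle mu f).
Local Notation weight g := (fun z => expR (f z) * g z).

Lemma dcont_measurable_fun (g : M -> R) : d_continuous d g ->
  measurable_fun (setT : set (BorelM d)) g.
Proof.
move=> cg mT; apply: (measurability _ (measurable_realfun.RGenOInfty.measurableE R)) => //.
move=> _ [_ [x ->] <-]; apply: measurableI => //.
apply: sub_sigma_algebra => a /=; rewrite in_itv /= andbT => ha.
have e0 : 0 < g a - x by rewrite subr_gt0.
have [de de0 Hd] := cg a _ e0; exists de => // b dab.
rewrite /= in_itv /= andbT; have := Hd b dab; have := ler_norm (g a - g b); lra.
Qed.

Lemma scons_integrable g x : C g ->
  mu.-integrable setT (EFin \o (fun a => g (scons a x))).
Proof.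
move=> cg; have mu_fin : (mu [set: BorelM d] < +oo)%E by rewrite probability_setT ltry.
apply: measurable_bounded_integrable => //.
- by apply: dcont_measurable_fun; exact: (dcont_scons dm dB).
- have [K HK] := dcont_bounded dm dB dc cg; exists K; split; first exact: num_real.
  by move=> K' KK' a _; apply: le_trans (HK _) (ltW KK').
Qed.

Let dcont_weight g : C g -> C (weight g).
Proof. by move=> cg; apply: (dcontM dm dB) => //; exact: (dcont_expR dm dB). Qed.

Let weight_integrable g x : C g ->
  mu.-integrable setT (EFin \o (fun a => weight g (scons a x))).
Proof. by move=> cg; apply: scons_integrable; exact: dcont_weight. Qed.

Let RuelleE g x : L g x = \int[mu]_(a in setT) weight g (scons a x).
Proof. by []. Qed.

Lemma RuelleD g1 g2 : C g1 -> C g2 -> L (fun z => g1 z + g2 z) = L g1 \+ L g2.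
Proof.
move=> c1 c2; apply/funext => x; rewrite /= !RuelleE.
rewrite -RintegralD ?weight_integrable //.
by apply: eq_Rintegral => a _; rewrite mulrDr.
Qed.

Lemma RuelleZ c g : C g -> L (fun z => c * g z) = (fun x => c * L g x).
Proof.
move=> cg; apply/funext => x; rewrite !RuelleE.
rewrite -RintegralZl ?weight_integrable //.
by apply: eq_Rintegral => a _; rewrite mulrCA.
Qed.

Lemma Ruelle_le g1 g2 : C g1 -> C g2 -> (forall z, g1 z <= g2 z) ->
  forall x, L g1 x <= L g2 x.
Proof.
move=> c1 c2 g12 x; rewrite !RuelleE; apply: le_Rintegral; rewrite ?weight_integrable //.
by move=> a _; rewrite ler_wpM2l ?expR_ge0.
Qed.

Lemma Ruelle_shiftM (psi : (nat -> M) -> R) g : C g ->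
  L (fun z => psi (Defs.shift z) * g z) = (fun x => psi x * L g x).
Proof.
move=> cg; apply/funext => x; rewrite !RuelleE -RintegralZl ?weight_integrable //.
by apply: eq_Rintegral => a _; rewrite mulrCA.
Qed.

Lemma dcont_Ruelle g : C g -> C (L g).
Proof.
move=> cg x e e0; have e2 : 0 < e / 2 by rewrite divr_gt0.
have [de de0 Hd] := dcont_uniform dm dB dc (dcont_weight cg) e2.
exists (2 * de) => [|y Dxy]; first by rewrite mulr_gt0.
apply: (le_lt_trans (y := e / 2)); last by rewrite ltr_pdivrMr // ltr_pMr // ltr1n.
rewrite !RuelleE; apply: Rintegral_dist_le; rewrite ?weight_integrable // => a.
by apply/ltW/Hd; rewrite (dOmega_scons dm dB) (d_refl dm); lra.
Qed.

Lemma dcont_iter_Ruelle n g : C g -> C (iter n L g).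
Proof. by move=> cg; elim: n => [//|n IH]; exact: dcont_Ruelle. Qed.

Lemma iter_RuelleD n g1 g2 : C g1 -> C g2 ->
  iter n L (fun z => g1 z + g2 z) = iter n L g1 \+ iter n L g2.
Proof.
move=> c1 c2; elim: n => [//|n IH]; rewrite !iterS IH.
by apply: RuelleD; exact: dcont_iter_Ruelle.
Qed.

Lemma iter_RuelleZ n c g : C g ->
  iter n L (fun z => c * g z) = (fun x => c * iter n L g x).
Proof.
move=> cg; elim: n => [//|n IH]; rewrite !iterS IH.
by apply: RuelleZ; exact: dcont_iter_Ruelle.
Qed.

Lemma iter_Ruelle_le n g1 g2 : C g1 -> C g2 -> (forall z, g1 z <= g2 z) ->
  forall x, iter n L g1 x <= iter n L g2 x.
Proof.
move=> c1 c2 g12; elim: n => [//|n IH] x; rewrite !iterS.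
by apply: Ruelle_le => //; exact: dcont_iter_Ruelle.
Qed.

Lemma iter_Ruelle_sum n m (G : nat -> (nat -> M) -> R) : (forall j, C (G j)) ->
  iter n L (fun z => \sum_(j < m) G j z) = (fun x => \sum_(j < m) iter n L (G j) x).
Proof.
move=> cG; elim: m => [|m IH].
  rewrite (_ : (fun z => \sum_(j < 0) G j z) = fun z => 0 * 1); last first.
    by apply/funext => z; rewrite big_ord0 mul0r.
  rewrite iter_RuelleZ; last exact: dcont_cst.
  by apply/funext => x; rewrite big_ord0 mul0r.
under eq_fun do rewrite big_ord_recr /=.
rewrite iter_RuelleD ?IH //; last exact: (dcont_sum dm dB).
by apply/funext => x; rewrite big_ord_recr.
Qed.

Lemma iter_Ruelle_shiftM k (psi : (nat -> M) -> R) g : C g ->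
  iter k L (fun z => psi (iter k Defs.shift z) * g z) = (fun x => psi x * iter k L g x).
Proof.
elim: k g => [//|k IH] g cg; rewrite iterSr.
under eq_fun do rewrite iterSr.
rewrite (Ruelle_shiftM (fun w => psi (iter k Defs.shift w)) cg) IH; last exact: dcont_Ruelle.
by apply/funext => x; rewrite iterSr.
Qed.

Lemma iter_Ruelle_Birkhoff n phi : C phi ->
  iter n L (Birkhoff n phi) =
  (fun x => \sum_(j < n) iter (n - j) L (fun z => phi z * iter j L (fun=> 1) z) x).
Proof.
move=> cphi; rewrite /Birkhoff (@iter_Ruelle_sum _ _ (fun j z => phi (iter j Defs.shift z))).
  apply/funext => x; apply: eq_bigr => j _.
  rewrite -{1}(subnK (ltnW (ltn_ord j))) iterD -iter_Ruelle_shiftM; last exact: dcont_cst.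
  by congr (iter _ _ (iter _ _ _) _); apply/funext => z; rewrite mulr1.
by move=> j; exact: (dcont_iter_shift dm dB).
Qed.

Lemma iter_Ruelle_norm_le n c g : C g -> (forall z, `|g z| <= c) ->
  forall x, `|iter n L g x| <= c * iter n L (fun=> 1) x.
Proof.
move=> cg gc x; have cc a : C (fun=> a * 1) by exact: dcont_cst.
have := iter_Ruelle_le n (g1 := g) (g2 := fun=> c * 1) cg (cc c).
have := iter_Ruelle_le n (g1 := fun=> - c * 1) (g2 := g) (cc (- c)) cg.
rewrite !(iter_RuelleZ n _ (@dcont_cst _ _ d 1)) => lo up; rewrite ler_norml -mulNr.
apply/andP; split; [apply: lo | apply: up] => z; rewrite mulr1;
  by have := gc z; rewrite ler_norml => /andP[].
Qed.

End Ruelle_operator.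

Section supnorm.
Variables (R : realType) (T : pointedType).

Lemma supnorm_le (g : T -> R) c : (forall x, `|g x| <= c) -> 0 <= supnorm g <= c.
Proof.
move=> gc; have gub : has_ubound [set `|g x| | x in [set: T]] by exists c => _ [x _ <-].
apply/andP; split.
  by apply: le_trans (normr_ge0 (g point)) _; apply: ub_le_sup => //; exists point.
by apply: ge_sup; [exists `|g point|, point | move=> _ [x _ <-]].
Qed.

Lemma supnorm_ge (g : T -> R) : (exists K, forall x, `|g x| <= K) ->
  forall x, `|g x| <= supnorm g.
Proof. by move=> [K gK] x; apply: ub_le_sup; [exists K => _ [y _ <-] | exists x]. Qed.

Lemma cvg0_supnorm (g : nat -> T -> R) (r : nat -> R) :
  (\forall n \near \oo, forall x, `|g n x| <= r n) -> r @ \oo --> 0 ->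
  (fun n => supnorm (g n)) @ \oo --> 0.
Proof.
move=> gr r0; apply: (squeeze_cvgr _ (cvg_cst 0) r0).
by apply: filterS gr => n; exact: supnorm_le.
Qed.

Lemma uniform_ratio_cvg (P U : nat -> T -> R) (h : T -> R) (c m : R) (e a : nat -> R) :
  0 < m -> (forall x, m <= h x) -> e @ \oo --> 0 -> a @ \oo --> 0 ->
  (\forall n \near \oo, forall x, `|P n x - c * h x| <= e n) ->
  (forall n x, `|U n x - h x| <= a n) ->
  (fun n => supnorm (fun x => P n x / U n x - c)) @ \oo --> 0.
Proof.
move=> m0 hm e0 a0 Pe Ua; have m2 : 0 < m / 2 by rewrite divr_gt0.
apply: (@cvg0_supnorm _ (fun n => 2 / m * (e n + `|c| * a n))); last first.
  rewrite -(mulr0 (2 / m)); apply: cvgM; first exact: cvg_cst.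
  rewrite -(addr0 0); apply: cvgD => //.
  by rewrite -(mulr0 `|c|); apply: cvgM => //; exact: cvg_cst.
move/cvgrPdist_lt/(_ _ m2): a0; apply: filterS2 Pe => n Pen.
rewrite sub0r normrN => an x.
have Ux : m / 2 <= U n x.
  have := Ua n x; have := hm x; have := ler_norm (a n); rewrite ler_norml; lra.
have U0 : 0 < U n x by apply: lt_le_trans Ux.
have -> : P n x / U n x - c = (P n x - c * h x + c * (h x - U n x)) / U n x.
  by field; rewrite gt_eqF.
have XE : `|P n x - c * h x + c * (h x - U n x)| <= e n + `|c| * a n.
  apply: le_trans (ler_normD _ _) _; rewrite normrM [`|h x - _|]distrC.
  by apply: lerD; [exact: Pen | rewrite ler_wpM2l].
have iU : (U n x)^-1 <= 2 / m by rewrite -(invf_div m 2) lef_pV2 ?posrE.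
rewrite normrM normfV (gtr0_norm U0) mulrC.
by apply: ler_pM => //; rewrite invr_ge0 ltW.
Qed.

End supnorm.

Section Birkhoff_averages.
Variables (R : realType) (M : pointedType) (d : M -> M -> R).
Hypothesis dm : is_metric d.
Variable B : R.
Hypothesis dB : forall a b, d a b <= B.
Hypothesis dc : d_compact d.
Variables (mu : probability (BorelM d) R) (f : (nat -> M) -> R).
Hypothesis cf : d_continuous (dOmega d) f.
Local Notation C := (d_continuous (dOmega d)).
Local Notation L := (Ruelle mu f).
(* [I g] stands for [\int g d nu_f]; [nu_f] enters only through [I1] and [RPF_cvg]. *)
Variables (lam : R) (h : (nat -> M) -> R) (I : ((nat -> M) -> R) -> R).
Hypothesis lam0 : 0 < lam.
Hypothesis ch : C h.
Hypothesis hpos : forall x, 0 < h x.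
Hypothesis I1 : I (fun=> 1) = 1.
Hypothesis RPF_cvg : forall g, C g ->
  (fun n => supnorm (fun x => lam ^- n * iter n L g x - h x * I g)) @ \oo --> 0.
Variable phi : (nat -> M) -> R.
Hypothesis cphi : C phi.

Local Notation u j x := (lam ^- j * iter j L (fun=> 1) x).
Let c := I (fun y => phi y * h y).
Let a j := supnorm (fun x => lam ^- j * iter j L (fun=> 1) x - h x * I (fun=> 1)).
Let b k := supnorm (fun x => lam ^- k * iter k L (fun y => phi y * h y) x - h x * c).

Let dcont_iterL n g : C g -> C (iter n L g) := @dcont_iter_Ruelle _ _ _ dm _ dB dc mu _ cf n g.

Let dcont_scaled k g : C g -> C (fun x => k * g x).
Proof. by apply: (dcontM dm dB); exact: dcont_cst. Qed.

Let dcont_u j : C (fun x => u j x).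
Proof. by apply/dcont_scaled/dcont_iterL; exact: dcont_cst. Qed.

Let RPF_ge g n x : C g ->
  `|lam ^- n * iter n L g x - h x * I g| <=
  supnorm (fun x => lam ^- n * iter n L g x - h x * I g).
Proof.
move=> cg; apply: (@supnorm_ge _ _ (fun x => lam ^- n * iter n L g x - h x * I g)).
apply/(dcont_bounded dm dB dc)/(dcontB dm dB).
  exact/dcont_scaled/dcont_iterL.
by under eq_fun do rewrite mulrC; exact: dcont_scaled.
Qed.

Let u_near_h j x : `|u j x - h x| <= a j.
Proof. by have := RPF_ge j x (@dcont_cst _ _ d 1); rewrite {1}I1 mulr1. Qed.

Let phih_near k x : `|lam ^- k * iter k L (fun y => phi y * h y) x - h x * c| <= b k.
Proof. by apply: RPF_ge; exact: (dcontM dm dB). Qed.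

Lemma normalized_Birkhoff n x :
  lam ^- n * iter n L (Birkhoff n phi) x =
  \sum_(j < n) lam ^- (n - j) * iter (n - j) L (fun z => phi z * u j z) x.
Proof.
rewrite (iter_Ruelle_Birkhoff dm dB dc mu cf _ cphi) mulr_sumr; apply: eq_bigr => j _.
have lamj : lam ^+ j != 0 by rewrite expf_neq0 ?gt_eqF.
have lamnj : lam ^+ (n - j) != 0 by rewrite expf_neq0 ?gt_eqF.
rewrite (_ : (fun z => phi z * iter j L (fun=> 1) z) =
             (fun z => lam ^+ j * (phi z * u j z))); last first.
  by apply/funext => z; field.
rewrite (iter_RuelleZ dm dB dc mu cf); last exact: (dcontM dm dB cphi (dcont_u j)).
have -> : lam ^+ n = lam ^+ (n - j) * lam ^+ j by rewrite -exprD subnK // ltnW.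
field.
by apply/andP.
Qed.


Let term_bound : exists K, forall k j x,
  `|lam ^- k * iter k L (fun z => phi z * u j z) x - c * h x| <= b k + K * a j.
Proof.
have [Kp hp] := dcont_bounded dm dB dc cphi.
have [Kh hh] := dcont_bounded dm dB dc ch.
have [Ka [_ hKa]] := cvg_seq_bounded (cvgP _ (RPF_cvg (@dcont_cst _ _ d 1))).
have Ka1 j : a j <= Ka + 1.
  by apply: le_trans (ler_norm _) _; apply: hKa => //; rewrite ltrDl.
have Kp0 : 0 <= Kp := le_trans (normr_ge0 _) (hp point).
exists (Kp * (Kh + Ka + 1)) => k j x.
have a0 : 0 <= a j := le_trans (normr_ge0 _) (u_near_h j x).
have uk : u k x <= Kh + Ka + 1.
  have := u_near_h k x; have := hh x; have := Ka1 k; rewrite !ler_norml; lra.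
have cdiff : C (fun z => phi z * (u j z - h z)).
  by apply: (dcontM dm dB) => //; exact: (dcontB dm dB).
have diff_le z : `|phi z * (u j z - h z)| <= Kp * a j.
  by rewrite normrM ler_pM.
have := iter_Ruelle_norm_le dm dB dc mu cf k cdiff diff_le x.
rewrite (_ : (fun z => phi z * u j z) =
             (fun z => phi z * h z + phi z * (u j z - h z))); last first.
  by apply/funext => z; ring.
rewrite (iter_RuelleD dm dB dc mu cf); [|exact: (dcontM dm dB)|exact: cdiff] => /=.
set P := iter k L (fun z => phi z * h z) x.
set E := iter k L (fun z => phi z * (u j z - h z)) x => hE.
have li : 0 < lam ^- k by rewrite invr_gt0 exprn_gt0.
have lE : `|lam ^- k * E| <= Kp * (Kh + Ka + 1) * a j.
  rewrite normrM gtr0_norm //; apply: le_trans (ler_wpM2l (ltW li) hE) _.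
  have := mulr_ge0 Kp0 a0; move: uk; nra.
have -> : lam ^- k * (P + E) - c * h x = (lam ^- k * P - h x * c) + lam ^- k * E.
  by rewrite /c; ring.
by apply: le_trans (ler_normD _ _) _; apply: lerD => //; exact: phih_near.
Qed.

Let average_bound : exists K, forall n x, (0 < n)%N ->
  `|n%:R^-1 * (lam ^- n * iter n L (Birkhoff n phi) x) - c * h x|
    <= n%:R^-1 * \sum_(j < n) (b (n - j)%N + K * a j).
Proof.
have [K hK] := term_bound; exists K => n x n0.
have nz : n%:R != 0 :> R by rewrite pnatr_eq0 -lt0n.
have -> : c * h x = n%:R^-1 * \sum_(j < n) (c * h x).
  by rewrite sumr_const card_ord -(mulr_natl (c * h x)) mulKf.
rewrite normalized_Birkhoff -mulrBr -sumrB normrM ger0_norm ?invr_ge0 ?ler0n //.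
apply: ler_wpM2l; first by rewrite invr_ge0 ler0n.
by apply: le_trans (ler_norm_sum _ _ _) _; apply: ler_sum => j _; exact: hK.
Qed.

Let normalize_ratio n x :
  n%:R^-1 * (iter n L (Birkhoff n phi) x / iter n L (fun=> 1) x) =
  n%:R^-1 * (lam ^- n * iter n L (Birkhoff n phi) x) / u n x.
Proof.
have lamn : lam ^+ n != 0 by rewrite expf_neq0 ?gt_eqF.
rewrite -mulrA invfM invrK; congr (_ * _); set w := (iter n L (fun=> 1) x)^-1; by field.
Qed.

Lemma Birkhoff_ratio_cvg :
  (fun n => supnorm (fun x =>
     n%:R^-1 * (iter n L (Birkhoff n phi) x / iter n L (fun=> 1) x) - c)) @ \oo --> 0.
Proof.
have [m m0 hm] := dcont_inf_gt0 dm dB dc ch hpos.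
have [K hK] := average_bound.
have a_cvg : a @ \oo --> 0 := RPF_cvg (@dcont_cst _ _ d 1).
have b_cvg : b @ \oo --> 0 := RPF_cvg (dcontM dm dB cphi ch).
under eq_fun do under eq_fun do rewrite normalize_ratio.
apply: (uniform_ratio_cvg m0 hm (cvg_mean_reversed K a_cvg b_cvg) a_cvg _ u_near_h).
by exists 1%N => // n n1 x; exact: hK.
Qed.

End Birkhoff_averages.

Theorem mainTheorem4 (R : realType) (M : pointedType) (d : M -> M -> R)
  (mu : probability (BorelM d) R)
  (alpha : R) (f : (nat -> M) -> R)
  (lam : R) (h : (nat -> M) -> R) (nu : probability (BorelOmega d) R) :
  is_metric d -> d_compact d ->
  (forall U : set M, d_open d U -> U !=set0 -> (0 < mu U)%E) ->
  0 < alpha < 1 -> d_holder (dOmega d) alpha f ->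
  0 < lam ->
  d_continuous (dOmega d) h -> (forall x, 0 < h x) ->
  (forall x, Ruelle mu f h x = lam * h x) ->
  (forall phi : (nat -> M) -> R, d_continuous (dOmega d) phi ->
     (\int[nu]_x (Ruelle mu f phi x)%:E = lam%:E * \int[nu]_x (phi x)%:E)%E) ->
  (\int[nu]_x (h x)%:E = 1)%E ->
  (forall phi : (nat -> M) -> R, d_continuous (dOmega d) phi ->
     (fun n => supnorm (fun x : nat -> M =>
        lam ^- n * iter n (Ruelle mu f) phi x
        - h x * fine (\int[nu]_y (phi y)%:E)%E)) @ \oo --> (0 : R)) ->
  forall phi : (nat -> M) -> R, d_continuous (dOmega d) phi ->
    (fun n => supnorm (fun x : nat -> M =>
       n%:R^-1 * (iter n (Ruelle mu f) (Birkhoff n phi) x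
                  / iter n (Ruelle mu f) (fun _ => 1) x)
       - fine (\int[nu]_y (phi y * h y)%:E)%E)) @ \oo --> (0 : R).
Proof.
move=> dm dc _ /andP[alpha0 _] f_holder lam0 ch hpos _ _ _ RPF_cvg phi cphi.
have [B dB] := compact_metric_bounded dm dc.
have cf := dcont_holder dm dB alpha0 f_holder.
apply: (Birkhoff_ratio_cvg dm dB dc cf lam0 ch hpos _ RPF_cvg cphi).
by rewrite integral_cst //= probability_setT mul1e.
Qed.
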